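(* Let $A\in P(n)$, $m\in\mathbb N$, $p_m=(1,\dots,1)^T\in\mathbb C^m$, and let $A^{(m)}=p_mp_m^*\otimes A\in P(nm)$ (the $m\times m$ block matrix all of whose blocks equal $A$). Then $I(A^{(m)})=I(A)$ and $I(sp,A^{(m)})=I(sp,A)$.
   Context: $P(k)$ denotes positive semidefinite complex $k\times k$ matrices; $\otimes$ is the Kronecker product; $\circ$ is the Hadamard (entrywise) product. For $C\in P(k)$, with $P_k$ the all-ones $k\times k$ matrix, $I(C)=\max\{\lambda\ge0: C-\lambda P_k\ge0\}$, and $I(sp,C)=\min\{\|C\circ B\|: B\in P(k),\ \|B\|=1\}$, where $\|\cdot\|$ is the spectral (operator) norm. *)

From HB Require Import structures.
From mathcomp Require Import all_boot all_order all_algebra.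
From mathcomp Require Import classical_sets reals.
From mathcomp Require Import complex mxtens.

Set Implicit Arguments.
Unset Strict Implicit.
Unset Printing Implicit Defensive.

Import Order.TTheory GRing.Theory Num.Theory.
Local Open Scope ring_scope.
Local Open Scope classical_set_scope.

Section Defs.
Variable R : realType.

Definition adjmx {k l : nat} (M : 'M[R[i]]_(k, l)) : 'M[R[i]]_(l, k) :=
  \matrix_(a, b) conjc (M b a).

(* P(k): positive semidefinite complex k x k matrices:
   x^* C x >= 0 (as an element of C, i.e. real and nonnegative) for all x. *)
Definition psd {k : nat} (C : 'M[R[i]]_k) : Prop :=
  forall x : 'cV[R[i]]_k, 0 <= (adjmx x *m C *m x) 0 0.

Definition onesmx (k : nat) : 'M[R[i]]_k := const_mx 1.

Definition hadamard {k : nat} (C B : 'M[R[i]]_k) : 'M[R[i]]_k :=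
  \matrix_(a, b) (C a b * B a b).

Definition vnorm {k : nat} (x : 'cV[R[i]]_k) : R :=
  Num.sqrt (\sum_(a < k) ComplexField.Normc.normc (x a 0) ^+ 2).

Definition opnorm {k : nat} (M : 'M[R[i]]_k) : R :=
  sup [set vnorm (M *m x) | x in [set x : 'cV[R[i]]_k | vnorm x = 1]].

Definition Iidx {k : nat} (C : 'M[R[i]]_k) : R :=
  sup [set lam : R | 0 <= lam /\ psd (C - (lam%:C)%C *: onesmx k)].

Definition Isp {k : nat} (C : 'M[R[i]]_k) : R :=
  inf [set opnorm (hadamard C B) | B in [set B : 'M[R[i]]_k | psd B /\ opnorm B = 1]].

End Defs.

Definition blockrep {R : realType} (m : nat) {n : nat} (A : 'M[R[i]]_n)
  : 'M[R[i]]_(m * n) := tensmx (onesmx R m) A.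

From HB Require Import structures.
From mathcomp Require Import all_boot all_order all_algebra.
From mathcomp Require Import boolp classical_sets reals.
From mathcomp Require Import complex mxtens.
From mathcomp Require Import spectral.
From mathcomp Require Import ring lra.

(* For the block matrix [J_m (x) B] one has [x^* (J_m (x) B) x = s^* B s], where [s]
   is the sum of the [m] blocks of [x]; so [J_m (x) B] is positive semidefinite iff [B]
   is, and since [A^(m) - lam P_(mn) = J_m (x) (A - lam P_n)] the index [I] is unchanged.

   For [I(sp, _)], a competitor [B] for [A] yields the competitor [(1/m) J_m (x) B] for
   [A^(m)], of the same norm, with [A^(m) o B' = (1/m) J_m (x) (A o B)].  Conversely, for
   [B' >= 0] of norm 1 choose a unit top eigenvector [x], so that [B' >= x x^*], and
   Schur's product theorem gives [A^(m) o B' >= A^(m) o x x^*].  With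
   [y_a = (sum_i |x_(i,a)|^2)^(1/2)] the rank-one matrix [B = y y^*] has norm 1, and the
   quadratic form of [A o B] at [v] is that of [A^(m) o x x^*] at some [v'] with
   [|v'| <= |v|].  For positive semidefinite matrices the norm is governed by the
   quadratic form, whence [||A o B|| <= ||A^(m) o B'||]. *)

Set Implicit Arguments.
Unset Strict Implicit.
Unset Printing Implicit Defensive.

Import Order.TTheory GRing.Theory Num.Theory.
Local Open Scope ring_scope.

Section BlockRepetition.
Variable R : realType.
Local Notation C := R[i].
Local Notation normc := ComplexField.Normc.normc.

Lemma conjcE (x : C) : conjc x = x^*.
Proof.
have := sqr_normc x; rewrite normCK => E.
have [->|nz] := eqVneq x 0; first by rewrite conjC0 conjc0.
by apply: (mulfI nz); rewrite -E.
Qed.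

Lemma normcE (x : C) : (normc x)%:C%C = `|x|.
Proof. by case: x => a b; rewrite normc_def. Qed.

Lemma normc_ge0 (z : C) : 0 <= normc z.
Proof. by rewrite -ler0c normcE. Qed.

Lemma sqr_normcE (z : C) : (normc z ^+ 2)%:C%C = z^* * z.
Proof. by rewrite rmorphXn /= normcE normCK mulrC. Qed.

Lemma normc_real (t : R) : normc t%:C%C = `|t|.
Proof. by apply: (@complexI R); rewrite normcE normc_def /= expr0n addr0 sqrtr_sqr. Qed.

Lemma conjC_real (t : R) : (t%:C%C)^* = t%:C%C :> C.
Proof. by rewrite -conjcE conjc_real. Qed.

Lemma ge0_ReK (z : C) : 0 <= z -> (complex.Re z)%:C%C = z.
Proof. by move=> z0; rewrite RRe_real // ger0_real. Qed.

Lemma adjmxE k l (M : 'M[C]_(k, l)) : adjmx M = map_mx Num.conj M^T.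
Proof. by apply/matrixP => a b; rewrite !mxE conjcE. Qed.

Lemma adjmxD k l (M N : 'M[C]_(k, l)) : adjmx (M + N) = adjmx M + adjmx N.
Proof. by apply/matrixP => a b; rewrite !mxE !conjcE rmorphD. Qed.

Lemma adjmxZ k l (a : C) (M : 'M[C]_(k, l)) : adjmx (a *: M) = a^* *: adjmx M.
Proof. by apply/matrixP => i j; rewrite !mxE !conjcE rmorphM. Qed.

Lemma adjmxM k l p (M : 'M[C]_(k, l)) (N : 'M[C]_(l, p)) :
  adjmx (M *m N) = adjmx N *m adjmx M.
Proof. by rewrite !adjmxE trmx_mul map_mxM. Qed.

Lemma adjmxK k l (M : 'M[C]_(k, l)) : adjmx (adjmx M) = M.
Proof. by apply/matrixP => i j; rewrite !mxE !conjcE conjCK. Qed.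

Definition sform k (Q : 'M[C]_k) (v u : 'cV[C]_k) : C := (adjmx v *m Q *m u) 0 0.
Definition qform k (Q : 'M[C]_k) (x : 'cV[C]_k) : C := sform Q x x.

Lemma sformDl k (Q : 'M[C]_k) v1 v2 u : sform Q (v1 + v2) u = sform Q v1 u + sform Q v2 u.
Proof. by rewrite /sform adjmxD !mulmxDl mxE. Qed.

Lemma sformDr k (Q : 'M[C]_k) v u1 u2 : sform Q v (u1 + u2) = sform Q v u1 + sform Q v u2.
Proof. by rewrite /sform mulmxDr mxE. Qed.

Lemma sformZl k (Q : 'M[C]_k) a v u : sform Q (a *: v) u = a^* * sform Q v u.
Proof. by rewrite /sform adjmxZ -!scalemxAl mxE. Qed.

Lemma sformZr k (Q : 'M[C]_k) a v u : sform Q v (a *: u) = a * sform Q v u.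
Proof. by rewrite /sform -!scalemxAr mxE. Qed.

Lemma qformD k (Q : 'M[C]_k) u v :
  qform Q (u + v) = qform Q u + qform Q v + (sform Q u v + sform Q v u).
Proof. rewrite /qform sformDl !sformDr; ring. Qed.

Lemma qformZ k (Q : 'M[C]_k) (c : C) x : qform (c *: Q) x = c * qform Q x.
Proof. by rewrite /qform /sform -scalemxAr -scalemxAl mxE. Qed.

Lemma qformB k (P Q : 'M[C]_k) x : qform (P - Q) x = qform P x - qform Q x.
Proof. by rewrite /qform /sform mulmxBr mulmxBl [LHS]mxE [X in _ + X]mxE. Qed.

Lemma sformE k (Q : 'M[C]_k) v u :
  sform Q v u = \sum_a \sum_b (v a 0)^* * Q a b * u b 0.
Proof.
rewrite /sform mxE exchange_big /=; apply: eq_bigr => b _.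
rewrite mxE big_distrl /=; apply: eq_bigr => a _.
by rewrite !mxE conjcE.
Qed.

Lemma sform1E k (v u : 'cV[C]_k) : sform 1%:M v u = \sum_a (v a 0)^* * u a 0.
Proof.
rewrite sformE; apply: eq_bigr => a _.
rewrite (bigD1 a) //= big1 ?addr0; first by rewrite mxE eqxx mulr1.
by move=> b /negbTE nb; rewrite mxE eq_sym nb mulr0 mul0r.
Qed.

Lemma sform_delta k (Q : 'M[C]_k) a b :
  sform Q (delta_mx a 0) (delta_mx b 0) = Q a b.
Proof.
rewrite sformE (bigD1 a) //= [X in _ + X]big1 ?addr0; last first.
  move=> c ca; apply: big1 => d _; rewrite mxE (negbTE ca) /= conjC0; ring.
rewrite (bigD1 b) //= [X in _ + X]big1 ?addr0; last first.
  by move=> c cb; rewrite (mxE _ _ c) (negbTE cb) mulr0.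
by rewrite !mxE !eqxx /= conjC1 mul1r mulr1.
Qed.

Lemma sform1_delta k (j : 'I_k) (w : 'cV[C]_k) : sform 1%:M (delta_mx j 0) w = w j 0.
Proof.
rewrite sform1E (bigD1 j) //= big1 ?addr0; first by rewrite mxE !eqxx conjC1 mul1r.
by move=> a /negbTE aj; rewrite mxE aj conjC0 mul0r.
Qed.

Lemma qform_mulmx k (P : 'M[C]_k) v : qform P v = sform 1%:M v (P *m v).
Proof. by rewrite /qform /sform mulmx1 mulmxA. Qed.

Lemma qform_conjmx k (U M : 'M[C]_k) z :
  qform (U *m M *m adjmx U) z = qform M (adjmx U *m z).
Proof. by rewrite /qform /sform adjmxM adjmxK !mulmxA. Qed.

Lemma qform_diag k (d : 'rV[C]_k) w :
  qform (diag_mx d) w = \sum_j d 0 j * (normc (w j 0) ^+ 2)%:C%C.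
Proof.
rewrite /qform sformE; apply: eq_bigr => a _.
rewrite (bigD1 a) //= big1 ?addr0; last first.
  by move=> b /negbTE ba; rewrite mxE eq_sym ba mulr0n mulr0 mul0r.
by rewrite mxE eqxx mulr1n sqr_normcE; ring.
Qed.

Lemma psdP k (Q : 'M[C]_k) : psd Q <-> forall x, 0 <= qform Q x.
Proof. by []. Qed.

Lemma psd_sformC k (Q : 'M[C]_k) : psd Q -> forall u v, sform Q u v = (sform Q v u)^*.
Proof.
move=> Q0 u v; set a := sform Q u v; set b := sform Q v u.
have sum_real : (a + b)^* = a + b.
  have -> : a + b = qform Q (u + v) - qform Q u - qform Q v by rewrite qformD /a /b; ring.
  by apply/eqP; rewrite -CrealE !rpredB ?ger0_real ?Q0.
have diff_real : ('i * a - 'i * b)^* = 'i * a - 'i * b.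
  have -> : 'i * a - 'i * b = qform Q (u + 'i *: v) - qform Q u - qform Q ('i *: v).
    by rewrite qformD /a /b sformZl sformZr conjCi; ring.
  by apply/eqP; rewrite -CrealE !rpredB ?ger0_real ?Q0.
move: sum_real diff_real; rewrite rmorphD rmorphB !rmorphM /= conjCi => sum_real diff_real.
have diffE : - a^* + b^* = a - b.
  by apply: (mulfI (neq0Ci C)); rewrite mulrDr mulrBr -diff_real; ring.
have two_neq0 : (2%:R : C) != 0 by rewrite pnatr_eq0.
apply: (mulfI two_neq0).
have -> : 2%:R * a = (a + b) + (a - b) by ring.
by rewrite -sum_real -diffE; ring.
Qed.

Lemma ge0_quadratic_le (r s p : R) : 0 <= r -> 0 <= p -> 0 <= s ->
  (forall t : R, 0 <= r - 2%:R * t * s + t ^+ 2 * s * p) -> s <= r * p.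
Proof.
move=> r0 p0 s0 H.
have [p_eq0|p_neq0] := eqVneq p 0.
  have [s_eq0|s_neq0] := eqVneq s 0; first by rewrite s_eq0 p_eq0 mulr0.
  have sp : 0 < s by rewrite lt_def s_neq0 s0.
  have := H ((r + 1) / s); rewrite p_eq0 mulr0 addr0.
  have -> : 2%:R * ((r + 1) / s) * s = 2%:R * (r + 1) by field; rewrite gt_eqF.
  lra.
have pp : 0 < p by rewrite lt_def p_neq0 p0.
have := H p^-1.
have -> : r - 2%:R * p^-1 * s + p^-1 ^+ 2 * s * p = (r * p - s) / p.
  by field; rewrite gt_eqF.
by rewrite pmulr_lge0 ?invr_gt0 // subr_ge0.
Qed.

Lemma psd_CauchySchwarz k (Q : 'M[C]_k) u v : psd Q ->
  `|sform Q v u| ^+ 2 <= qform Q u * qform Q v.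
Proof.
move=> Q0; set c := sform Q v u.
have cu : sform Q u v = c^* by rewrite (psd_sformC Q0).
set r := complex.Re (qform Q u); set p := complex.Re (qform Q v).
set s := normc c ^+ 2.
have ec : c * c^* = s%:C%C by rewrite -normCK -normcE rmorphXn.
have eu : qform Q u = r%:C%C by rewrite /r ge0_ReK //; exact: Q0.
have ev : qform Q v = p%:C%C by rewrite /p ge0_ReK //; exact: Q0.
clearbody r p s.
have quad : forall t : R, 0 <= r - 2%:R * t * s + t ^+ 2 * s * p.
  move=> t; rewrite -ler0c.
  have := (Q0 : forall x, 0 <= qform Q x) (u + (- (t%:C%C * c)) *: v).
  rewrite qformD {2}/qform !sformZr !sformZl cu -/(qform Q v) -/c.
  rewrite !rmorphN rmorphM /= conjC_real.
  have -> : qform Q u + - (t%:C%C * c) * (- (t%:C%C * c^*) * qform Q v) +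
    (- (t%:C%C * c) * c^* + - (t%:C%C * c^*) * c) =
    qform Q u - 2%:R * t%:C%C * (c * c^*) + t%:C%C ^+ 2 * (c * c^*) * qform Q v.
    by ring.
  by rewrite ec eu ev rmorphD rmorphB !rmorphM rmorph_nat.
have r0 : 0 <= r by rewrite -ler0c -eu; exact: Q0.
have p0 : 0 <= p by rewrite -ler0c -ev; exact: Q0.
have s0 : 0 <= s by rewrite -ler0c -ec mul_conjC_ge0.
by rewrite normCK ec eu ev -rmorphM lecR ge0_quadratic_le.
Qed.

Definition sqnorm k (x : 'cV[C]_k) : R := \sum_a normc (x a 0) ^+ 2.

Lemma sqnorm_ge0 k (x : 'cV[C]_k) : 0 <= sqnorm x.
Proof. by apply: sumr_ge0 => a _; rewrite sqr_ge0. Qed.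

Lemma vnormE k (x : 'cV[C]_k) : vnorm x = Num.sqrt (sqnorm x).
Proof. by []. Qed.

Lemma vnorm_sqr k (x : 'cV[C]_k) : vnorm x ^+ 2 = sqnorm x.
Proof. by rewrite vnormE sqr_sqrtr ?sqnorm_ge0. Qed.

Lemma sqnorm_qform k (x : 'cV[C]_k) : (sqnorm x)%:C%C = qform 1%:M x.
Proof.
rewrite /qform sform1E /sqnorm rmorph_sum /=; apply: eq_bigr => a _.
by rewrite sqr_normcE.
Qed.

Lemma psd1 k : psd (1%:M : 'M[C]_k).
Proof. by apply/psdP => x; rewrite -sqnorm_qform ler0c sqnorm_ge0. Qed.

Lemma sqr_normc_sform1_le k (v u : 'cV[C]_k) :
  normc (sform 1%:M v u) ^+ 2 <= sqnorm u * sqnorm v.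
Proof.
rewrite -lecR rmorphXn /= normcE rmorphM /= !sqnorm_qform.
exact: psd_CauchySchwarz (@psd1 k).
Qed.

Lemma sqnorm_eq0 k (x : 'cV[C]_k) : sqnorm x = 0 -> x = 0.
Proof.
move=> x0; apply/matrixP => a b; rewrite [b]ord1 mxE.
have := psumr_eq0P (fun i _ => sqr_ge0 (normc (x i 0))) x0 (i:=a) isT.
by move/eqP; rewrite sqrf_eq0 => /eqP /ComplexField.Normc.eq0_normc.
Qed.

Lemma sqnormZ k (c : C) (x : 'cV[C]_k) : sqnorm (c *: x) = normc c ^+ 2 * sqnorm x.
Proof.
rewrite /sqnorm mulr_sumr; apply: eq_bigr => a _.
by rewrite mxE ComplexField.Normc.normcM exprMn.
Qed.

Lemma vnormZ k (c : C) (x : 'cV[C]_k) : vnorm (c *: x) = normc c * vnorm x.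
Proof. by rewrite !vnormE sqnormZ sqrtrM ?sqr_ge0 // sqrtr_sqr ger0_norm ?normc_ge0. Qed.

Lemma sqnorm_delta k (j : 'I_k) : sqnorm (delta_mx j 0 : 'cV[C]_k) = 1.
Proof.
rewrite /sqnorm (bigD1 j) //= big1 ?addr0.
  by rewrite mxE !eqxx ComplexField.Normc.normc1 expr1n.
by move=> a /negbTE aj; rewrite mxE aj ComplexField.Normc.normc0 expr0n.
Qed.

Lemma sqnorm_isometry k (U : 'M[C]_k) v :
  adjmx U *m U = 1%:M -> sqnorm (U *m v) = sqnorm v.
Proof.
move=> UU; apply: (@complexI R); rewrite !sqnorm_qform /qform /sform adjmxM.
by rewrite mulmx1 -mulmxA (mulmxA (adjmx U)) UU mul1mx mulmx1.
Qed.

Lemma sqnorm_diag_mx_le k (d : 'rV[C]_k) w (l : R) : 0 <= l ->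
  (forall j, normc (d 0 j) <= l) -> sqnorm (diag_mx d *m w) <= l ^+ 2 * sqnorm w.
Proof.
move=> l0 dl; rewrite /sqnorm mulr_sumr; apply: ler_sum => j _.
rewrite mul_diag_mx mxE ComplexField.Normc.normcM exprMn ler_wpM2r ?sqr_ge0 //.
by rewrite ler_pXn2r ?nnegrE ?normc_ge0.
Qed.

Local Open Scope classical_set_scope.

Lemma opnorm_has_ubound k (M : 'M[C]_k) :
  has_ubound [set vnorm (M *m x) | x in [set x : 'cV[C]_k | vnorm x = 1]].
Proof.
exists (Num.sqrt (\sum_a \sum_b normc (M a b) ^+ 2)) => _ [x /= x1 <-].
rewrite /vnorm ler_sqrt; last by do 2![apply: sumr_ge0 => ? _]; rewrite sqr_ge0.
rewrite -[X in _ <= X]mulr1 -[1](expr1n _ 2) -x1 vnorm_sqr /sqnorm mulr_suml.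
apply: ler_sum => a _.
pose r := \col_b (M a b)^*.
have -> : (M *m x) a 0 = sform 1%:M r x.
  by rewrite sform1E mxE; apply: eq_bigr => b _; rewrite mxE conjCK.
apply: le_trans (sqr_normc_sform1_le r x) _; rewrite mulrC ler_wpM2r ?sqnorm_ge0 //.
rewrite le_eqVlt; apply/orP; left; apply/eqP; apply: eq_bigr => b _.
by rewrite mxE -conjcE; case: (M a b) => p q /=; rewrite sqrrN.
Qed.

Lemma opnorm_ge0 k (M : 'M[C]_k) : 0 <= opnorm M.
Proof.
have [[x x1]|no_unit] := pselect (exists x : 'cV[C]_k, vnorm x = 1).
  apply: le_trans (sqrtr_ge0 _ : 0 <= vnorm (M *m x)) _.
  by apply: ub_le_sup (opnorm_has_ubound M) _ _; exists x.
rewrite /opnorm (_ : [set _ | x in _] = set0) ?sup0 //.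
by apply/seteqP; split => // _ [x /= x1 _]; apply: no_unit; exists x.
Qed.

Lemma vnorm_mulmx_le k (M : 'M[C]_k) x : vnorm (M *m x) <= opnorm M * vnorm x.
Proof.
have [/eqP x0|xn0] := boolP (vnorm x == 0).
  have -> : x = 0 by apply: sqnorm_eq0; rewrite -vnorm_sqr x0 expr0n.
  by rewrite mulmx0 /vnorm /sqnorm big1 ?sqrtr0 ?mulr0 // => a _; rewrite mxE ComplexField.Normc.normc0 expr0n.
have vx : 0 < vnorm x by rewrite lt_def xn0 sqrtr_ge0.
have ivx : 0 <= (vnorm x)^-1 by rewrite invr_ge0 ltW.
have : vnorm (M *m ((vnorm x)^-1%:C%C *: x)) <= opnorm M.
  apply: ub_le_sup (opnorm_has_ubound M) _ _; exists ((vnorm x)^-1%:C%C *: x) => //=.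
  by rewrite vnormZ normc_real (ger0_norm ivx) mulVf ?gt_eqF.
by rewrite -scalemxAr vnormZ normc_real (ger0_norm ivx) mulrC ler_pdivrMr.
Qed.

Lemma sqnorm_mulmx_le k (M : 'M[C]_k) x : sqnorm (M *m x) <= opnorm M ^+ 2 * sqnorm x.
Proof.
rewrite -!vnorm_sqr -exprMn ler_pXn2r ?nnegrE ?vnorm_mulmx_le //.
  exact: sqrtr_ge0.
by rewrite mulr_ge0 ?opnorm_ge0 ?sqrtr_ge0.
Qed.

Lemma opnorm_le k (M : 'M[C]_k) (c : R) : 0 <= c ->
  (forall x, sqnorm (M *m x) <= c ^+ 2 * sqnorm x) -> opnorm M <= c.
Proof.
move=> c0 Mc.
have [[x x1]|no_unit] := pselect (exists x : 'cV[C]_k, vnorm x = 1).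
  apply: ge_sup; first by exists (vnorm (M *m x)), x.
  move=> _ [z /= z1 <-]; rewrite -(ler_pXn2r (n := 2)) ?nnegrE ?sqrtr_ge0 //.
  by rewrite vnorm_sqr -[X in _ <= X]mulr1 -[1](expr1n _ 2) -z1 vnorm_sqr.
rewrite /opnorm (_ : [set _ | x in _] = set0) ?sup0 //.
by apply/seteqP; split => // _ [x /= x1 _]; apply: no_unit; exists x.
Qed.

Local Close Scope classical_set_scope.

Lemma psd_hermitian k (Q : 'M[C]_k) : psd Q -> adjmx Q = Q.
Proof.
move=> Q0; apply/matrixP => a b; rewrite mxE conjcE.
by rewrite -!sform_delta [in RHS](psd_sformC Q0).
Qed.

Lemma psd_spectral k (Q : 'M[C]_k) : psd Q -> exists U (d : 'rV[C]_k),
  [/\ adjmx U *m U = 1%:M, Q = U *m diag_mx d *m adjmx U & forall j, 0 <= d 0 j].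
Proof.
move=> Q0; have Q_normal : Q \is normalmx.
  by apply/normalmxP; rewrite -adjmxE psd_hermitian.
have QE := orthomx_spectralP Q_normal.
set P := spectralmx Q in QE; set d := spectral_diag Q in QE.
have P_unitary : P \is unitarymx := spectral_unitarymx Q.
have PP : P *m adjmx P = 1%:M by rewrite adjmxE; apply/unitarymxP.
have invP : invmx P = adjmx P by rewrite adjmxE invmx_unitary.
exists (adjmx P), d; split; first by rewrite adjmxK.
  by rewrite adjmxK -invP.
move=> j; pose e : 'cV[C]_k := delta_mx j 0.
have <- : qform Q (adjmx P *m e) = d 0 j.
  rewrite /qform /sform adjmxM adjmxK [X in _ *m X *m _]QE invP.
  have -> : adjmx e *m P *m (adjmx P *m diag_mx d *m P) *m (adjmx P *m e) =
      adjmx e *m diag_mx d *m e.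
    by rewrite !mulmxA -!(mulmxA _ P (adjmx P)) PP !mulmx1.
  by rewrite -/(sform _ _ _) sform_delta mxE eqxx mulr1n.
exact: Q0.
Qed.

Lemma conjmx_diagE k (U : 'M[C]_k) (d : 'rV[C]_k) a b :
  (U *m diag_mx d *m adjmx U) a b = \sum_j U a j * d 0 j * (U b j)^*.
Proof. by rewrite mxE; apply: eq_bigr => j _; rewrite mul_mx_diag !mxE conjcE. Qed.

(* Schur product theorem: expanding [B = sum_j d_j u_j u_j^*] writes [z^* (A o B) z]
   as [sum_j d_j w_j^* A w_j] with [w_j = conj(u_j) o z]. *)
Lemma psd_hadamard k (A B : 'M[C]_k) : psd A -> psd B -> psd (hadamard A B).
Proof.
move=> A0 B0; apply/psdP => z; have [U [d [_ BE d0]]] := psd_spectral B0.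
pose w j : 'cV[C]_k := \col_a ((U a j)^* * z a 0).
have -> : qform (hadamard A B) z = \sum_j d 0 j * qform A (w j).
  rewrite /qform sformE.
  transitivity (\sum_a \sum_b \sum_j
      (z a 0)^* * A a b * (U a j * d 0 j * (U b j)^*) * z b 0).
    apply: eq_bigr => a _; apply: eq_bigr => b _.
    rewrite mxE BE conjmx_diagE !big_distrr /= big_distrl /=.
    by apply: eq_bigr => j _; ring.
  symmetry; under eq_bigr => j _ do rewrite sformE big_distrr /=.
  rewrite exchange_big /=; apply: eq_bigr => a _.
  under eq_bigr => j _ do rewrite big_distrr /=.
  rewrite exchange_big /=; apply: eq_bigr => b _.
  apply: eq_bigr => j _; rewrite !mxE rmorphM /= conjCK; ring.
by apply: sumr_ge0 => j _; apply: mulr_ge0; [exact: d0 | exact: A0].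
Qed.

Lemma hadamardBr k (A B B' : 'M[C]_k) :
  hadamard A (B - B') = hadamard A B - hadamard A B'.
Proof. by apply/matrixP => a b; rewrite !mxE mulrBr. Qed.

Lemma qform_rank1 k (y z : 'cV[C]_k) :
  qform (y *m adjmx y) z = (sform 1%:M y z)^* * sform 1%:M y z.
Proof.
rewrite /qform /sform !mulmxA -(mulmxA (adjmx z *m y)) mxE big_ord1 !mulmx1.
by have := psd_sformC (@psd1 k) z y; rewrite /sform !mulmx1 => ->.
Qed.

Lemma psd_rank1 k (y : 'cV[C]_k) : psd (y *m adjmx y).
Proof. by apply/psdP => z; rewrite qform_rank1 mulrC mul_conjC_ge0. Qed.

Lemma rank1_mulmx k (y z : 'cV[C]_k) : y *m adjmx y *m z = sform 1%:M y z *: y.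
Proof. by rewrite -mulmxA [adjmx y *m z]mx11_scalar mul_mx_scalar /sform mulmx1. Qed.

Lemma opnorm_rank1 k (y : 'cV[C]_k) : sqnorm y = 1 -> opnorm (y *m adjmx y) = 1.
Proof.
move=> y1; apply/le_anti/andP; split.
  apply: opnorm_le => // z; rewrite rank1_mulmx sqnormZ y1 expr1n mul1r mulr1.
  by have := sqr_normc_sform1_le y z; rewrite y1 mulr1.
have yy : sform 1%:M y y = 1 by rewrite -/(qform _ y) -sqnorm_qform y1.
by have := vnorm_mulmx_le (y *m adjmx y) y; rewrite rank1_mulmx yy scale1r vnormE y1 sqrtr1 mulr1.
Qed.

Lemma qform_le_opnorm k (P : 'M[C]_k) v : psd P ->
  qform P v <= (opnorm P * sqnorm v)%:C%C.
Proof.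
move=> P0; have Pv0 : 0 <= qform P v by exact: P0.
rewrite -(ge0_ReK Pv0) lecR; set p := complex.Re _.
have p0 : 0 <= p by rewrite -ler0c ge0_ReK.
have Nv0 : 0 <= opnorm P * sqnorm v by rewrite mulr_ge0 ?opnorm_ge0 ?sqnorm_ge0.
rewrite -(ler_pXn2r (n := 2)) ?nnegrE //.
have := sqr_normc_sform1_le v (P *m v).
rewrite -qform_mulmx -(ge0_ReK Pv0) -/p normc_real ger0_norm // => pCS.
apply: le_trans pCS _; rewrite exprMn [sqnorm v ^+ 2]expr2 mulrA ler_wpM2r ?sqnorm_ge0 //.
exact: sqnorm_mulmx_le.
Qed.

Lemma psd_opnorm_le k (Q : 'M[C]_k) (N : R) : psd Q -> 0 <= N ->
  (forall v, qform Q v <= (N * sqnorm v)%:C%C) -> opnorm Q <= N.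
Proof.
move=> Q0 N0 QN; apply: opnorm_le => // z; set w := Q *m z.
have QwQz : sform Q w z = (sqnorm w)%:C%C.
  by rewrite sqnorm_qform /qform /sform mulmx1 -mulmxA.
have := psd_CauchySchwarz z w Q0; rewrite QwQz normCK conjC_real -rmorphM.
move=> /le_trans /(_ (ler_pM (Q0 z) (Q0 w) (QN z) (QN w))); rewrite -rmorphM lecR.
move=> CS; have [w0|w_neq0] := eqVneq (sqnorm w) 0.
  by rewrite w0 mulr_ge0 ?sqr_ge0 ?sqnorm_ge0.
have w_gt0 : 0 < sqnorm w by rewrite lt_def w_neq0 sqnorm_ge0.
rewrite -(ler_pM2r w_gt0); apply: (le_trans CS).
by rewrite mulrACA -expr2 mulrA.
Qed.

Lemma psd_subr_rank1_top k (B : 'M[C]_k) : psd B -> opnorm B = 1 ->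
  exists x : 'cV[C]_k, sqnorm x = 1 /\ psd (B - x *m adjmx x).
Proof.
move=> B0 B1; have [U [d [UU BE d0]]] := psd_spectral B0.
have UU' : adjmx (adjmx U) *m adjmx U = 1%:M by rewrite adjmxK; apply: mulmx1C.
have k_gt0 : (0 < k)%N.
  rewrite lt0n; apply/eqP => k0; suff : opnorm B <= 0 by rewrite B1 ler10.
  apply: opnorm_le => // x; rewrite /sqnorm !big1 ?mulr0 // => -[i i_lt]; exfalso; by move: i_lt; rewrite k0.
pose j0 := [arg max_(j > Ordinal k_gt0) complex.Re (d 0 j)]%O.
have dmax j : complex.Re (d 0 j) <= complex.Re (d 0 j0).
  by rewrite /j0; case: arg_maxP => //= i _; apply.
have dE j : d 0 j = (complex.Re (d 0 j))%:C%C by rewrite ge0_ReK.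
have Re_d0 j : 0 <= complex.Re (d 0 j) by rewrite -ler0c -dE.
set lam := complex.Re (d 0 j0) in dmax.
have lam1 : 1 <= lam.
  rewrite -B1; apply: opnorm_le => [|z]; first exact: Re_d0.
  rewrite BE -!mulmxA sqnorm_isometry // -(sqnorm_isometry z UU').
  apply: sqnorm_diag_mx_le; first exact: Re_d0.
  by move=> j; rewrite dE normc_real ger0_norm.
pose e : 'cV[C]_k := delta_mx j0 0.
exists (U *m e); split; first by rewrite sqnorm_isometry // sqnorm_delta.
have -> : U *m e *m adjmx (U *m e) = U *m (e *m adjmx e) *m adjmx U.
  by rewrite adjmxM !mulmxA.
apply/psdP => z; rewrite qformB [in qform B z]BE !qform_conjmx.
rewrite qform_diag qform_rank1 sform1_delta (bigD1 j0) //= (dE j0) -/lam -sqr_normcE.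
set a := normc _ ^+ 2; set rest := \sum_(j | _) _.
have -> : lam%:C%C * a%:C%C + rest - a%:C%C = ((lam - 1) * a)%:C%C + rest.
  by rewrite [in RHS]rmorphM [in RHS]rmorphB /=; ring.
apply: addr_ge0; first by rewrite ler0c mulr_ge0 ?subr_ge0 ?sqr_ge0.
by apply: sumr_ge0 => j _; rewrite mulr_ge0 ?ler0c ?sqr_ge0.
Qed.

Lemma sum_mxtens (V : nmodType) m n (F : 'I_(m * n) -> V) :
  \sum_k F k = \sum_(i < m) \sum_(a < n) F (mxtens_index (i, a)).
Proof.
rewrite pair_big /= (reindex (@mxtens_index m n)) /=; last first.
  by exists (@mxtens_unindex m n) => k _; rewrite (mxtens_indexK, mxtens_unindexK).
by apply: eq_bigr => -[i a].
Qed.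

Definition blocksum m n (x : 'cV[C]_(m * n)) : 'cV[C]_n :=
  \col_a \sum_(i < m) x (mxtens_index (i, a)) 0.

Lemma qform_tens_ones m n (B : 'M[C]_n) x :
  qform (tensmx (onesmx R m) B) x = qform B (blocksum x).
Proof.
rewrite /qform !sformE sum_mxtens.
transitivity (\sum_(i < m) \sum_(a < n) \sum_(j < m) \sum_(b < n)
   (x (mxtens_index (i, a)) 0)^* * B a b * x (mxtens_index (j, b)) 0).
  apply: eq_bigr => i _; apply: eq_bigr => a _; rewrite sum_mxtens.
  apply: eq_bigr => j _; apply: eq_bigr => b _.
  by rewrite tensmxE mxE mul1r.
rewrite exchange_big /=; apply: eq_bigr => a _.
under eq_bigr => i _ do rewrite exchange_big /=.
rewrite exchange_big /=; apply: eq_bigr => b _.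
rewrite !mxE rmorph_sum /= big_distrl /= big_distrr /=.
under [RHS]eq_bigr => i _ do rewrite big_distrl /=.
by rewrite [RHS]exchange_big.
Qed.

Lemma psd_tens_ones m n (B : 'M[C]_n) : (0 < m)%N ->
  psd (tensmx (onesmx R m) B) <-> psd B.
Proof.
move=> m_gt0; split => B0; apply/psdP => y; last by rewrite qform_tens_ones; exact: B0.
pose i0 : 'I_m := Ordinal m_gt0.
pose x : 'cV[C]_(m * n) := \col_k
  (if (mxtens_unindex k).1 == i0 then y (mxtens_unindex k).2 0 else 0).
have -> : y = blocksum x.
  apply/matrixP => a b; rewrite [b]ord1 !mxE (bigD1 i0) //= big1 ?addr0.
    by rewrite mxE mxtens_indexK eqxx.
  by move=> i /negbTE i_neq0; rewrite mxE mxtens_indexK /= i_neq0.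
by rewrite -qform_tens_ones; exact: B0.
Qed.

Lemma blockrep_subr_ones m n (A : 'M[C]_n) (c : C) :
  blockrep m A - c *: onesmx R (m * n) = tensmx (onesmx R m) (A - c *: onesmx R n).
Proof. by apply/matrixP => k l; rewrite !mxE; ring. Qed.

Lemma Iidx_blockrep m n (A : 'M[C]_n) : (0 < m)%N -> Iidx (blockrep m A) = Iidx A.
Proof.
move=> m_gt0; rewrite /Iidx; congr sup.
by apply/seteqP; split => lam /= [lam0 Alam]; rewrite blockrep_subr_ones psd_tens_ones in Alam *.
Qed.

Lemma sqnorm_mxtens m n (x : 'cV[C]_(m * n)) :
  sqnorm x = \sum_(i < m) \sum_(a < n) normc (x (mxtens_index (i, a)) 0) ^+ 2.
Proof. exact: sum_mxtens. Qed.

Lemma sqnorm_blocksum_le m n (x : 'cV[C]_(m * n)) :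
  sqnorm (blocksum x) <= m%:R * sqnorm x.
Proof.
rewrite sqnorm_mxtens exchange_big /= /sqnorm mulr_sumr; apply: ler_sum => a _.
pose u : 'cV[C]_m := \col_i x (mxtens_index (i, a)) 0.
have -> : blocksum x a 0 = sform 1%:M (const_mx 1) u.
  by rewrite sform1E !mxE; apply: eq_bigr => i _; rewrite !mxE conjC1 mul1r.
have <- : sqnorm (const_mx 1 : 'cV[C]_m) = m%:R.
  rewrite /sqnorm (eq_bigr (fun _ => 1)) ?sumr_const ?card_ord //.
  by move=> i _; rewrite mxE ComplexField.Normc.normc1 expr1n.
have <- : sqnorm u = \sum_(i < m) normc (x (mxtens_index (i, a)) 0) ^+ 2.
  by apply: eq_bigr => i _; rewrite mxE.
by rewrite mulrC sqr_normc_sform1_le.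
Qed.

Lemma tens_ones_mulmxE m n (M : 'M[C]_n) x i a :
  (tensmx (onesmx R m) M *m x) (mxtens_index (i, a)) 0 = (M *m blocksum x) a 0.
Proof.
rewrite mxE sum_mxtens [in RHS]mxE.
under [RHS]eq_bigr => b _ do rewrite mxE big_distrr /=.
rewrite [RHS]exchange_big /=; apply: eq_bigr => j _; apply: eq_bigr => b _.
by rewrite !mxE !mxtens_indexK /= mul1r.
Qed.

Lemma sqnorm_tens_ones_mulmx m n (M : 'M[C]_n) x :
  sqnorm (tensmx (onesmx R m) M *m x) = m%:R * sqnorm (M *m blocksum x).
Proof.
rewrite sqnorm_mxtens.
under eq_bigr => i _ do under eq_bigr => a _ do rewrite tens_ones_mulmxE.
by rewrite sumr_const card_ord mulr_natl.
Qed.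

(* [(1/m) J_m (x) M] has the norm of [M]: the block sum of a vector costs at most a
   factor [m] in squared norm, and repeating a vector [m] times gains exactly [m]. *)
Lemma opnorm_scaled_tens_ones m n (M : 'M[C]_n) : (0 < m)%N ->
  opnorm (((m%:R : R)^-1)%:C%C *: tensmx (onesmx R m) M) = opnorm M.
Proof.
move=> m_gt0; set t := (m%:R : R)^-1; set T := tensmx _ M.
have m_pos : 0 < (m%:R : R) by rewrite ltr0n.
have t_pos : 0 < t by rewrite invr_gt0.
have mt : m%:R * t = 1 by rewrite mulfV ?gt_eqF.
have sqnorm_tT x : sqnorm (t%:C%C *: T *m x) = t * sqnorm (M *m blocksum x).
  rewrite -scalemxAl sqnormZ normc_real (ger0_norm (ltW t_pos)) sqnorm_tens_ones_mulmx.
  by rewrite expr2 -mulrA; congr (t * _); rewrite mulrA [t * _]mulrC mt mul1r.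
apply/le_anti/andP; split; apply: opnorm_le; rewrite ?opnorm_ge0 // => x.
  rewrite sqnorm_tT (le_trans (ler_wpM2l (ltW t_pos) (sqnorm_mulmx_le _ _))) //.
  rewrite mulrCA ler_wpM2l ?sqr_ge0 // /t ler_pdivrMl //.
  exact: sqnorm_blocksum_le.
pose y : 'cV[C]_(m * n) := \col_k (t%:C%C * x (mxtens_unindex k).2 0).
have y_sum : blocksum y = x.
  apply/matrixP => a b; rewrite [b]ord1 mxE.
  under eq_bigr => i _ do rewrite mxE mxtens_indexK /=.
  rewrite sumr_const card_ord -mulr_natl mulrA -(rmorph_nat (real_complex R)) /=.
  by rewrite -rmorphM /= mt mul1r.
have y_norm : sqnorm y = t * sqnorm x.
  rewrite sqnorm_mxtens; under eq_bigr => i _ do under eq_bigr => a _ do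
    rewrite mxE mxtens_indexK /= ComplexField.Normc.normcM normc_real exprMn.
  rewrite sumr_const card_ord -mulr_sumr -/(sqnorm x) -mulr_natl mulrA.
  by rewrite real_normK ?num_real // expr2 mulrA mt mul1r.
have := sqnorm_mulmx_le (t%:C%C *: T) y; rewrite sqnorm_tT y_sum y_norm.
by rewrite mulrCA ler_pM2l.
Qed.

Definition blockmass m n (x : 'cV[C]_(m * n)) : 'cV[C]_n :=
  \col_a (Num.sqrt (\sum_(i < m) normc (x (mxtens_index (i, a)) 0) ^+ 2))%:C%C.

Lemma sqnorm_blockmass m n (x : 'cV[C]_(m * n)) : sqnorm (blockmass x) = sqnorm x.
Proof.
rewrite sqnorm_mxtens exchange_big /=; apply: eq_bigr => a _.
by rewrite mxE normc_real ger0_norm ?sqrtr_ge0 // sqr_sqrtr // sumr_ge0 // => i _; rewrite sqr_ge0.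
Qed.

Lemma qform_hadamard_rank1 k (M : 'M[C]_k) (x v : 'cV[C]_k) :
  qform (hadamard M (x *m adjmx x)) v = qform M (\col_j ((x j 0)^* * v j 0)).
Proof.
rewrite /qform !sformE; apply: eq_bigr => a _; apply: eq_bigr => b _.
rewrite !mxE big_ord1 !mxE -conjcE rmorphM /= conjCK; ring.
Qed.

(* With [y = blockmass x], the vector [v'_(i,a) = x_(i,a) v_a / y_a] has
   [blocksum (conj x o v') = conj y o v], while [|v'| <= |v|]. *)
Lemma qform_hadamard_blockrep_lift m n (A : 'M[C]_n) (x : 'cV[C]_(m * n)) v :
  exists2 v', sqnorm v' <= sqnorm v &
    qform (hadamard (blockrep m A) (x *m adjmx x)) v' =
    qform (hadamard A (blockmass x *m adjmx (blockmass x))) v.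
Proof.
pose s a := \sum_(i < m) normc (x (mxtens_index (i, a)) 0) ^+ 2.
have s0 a : 0 <= s a by apply: sumr_ge0 => i _; rewrite sqr_ge0.
pose t a := if s a == 0 then 0 else v a 0 / (Num.sqrt (s a))%:C%C.
exists (\col_k (x k 0 * t (mxtens_unindex k).2)).
  rewrite sqnorm_mxtens exchange_big; apply: ler_sum => a _.
  under eq_bigr => i _ do rewrite mxE mxtens_indexK /= ComplexField.Normc.normcM exprMn.
  rewrite -mulr_suml -/(s a) /t; case: eqP => [sa|sa].
    by rewrite ComplexField.Normc.normc0 expr0n mulr0 sqr_ge0.
  rewrite ComplexField.Normc.normcM ComplexField.Normc.normcV normc_real exprMn.
  by rewrite ger0_norm ?sqrtr_ge0 // exprVn sqr_sqrtr // mulrCA mulfV ?mulr1 //; apply/eqP.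
rewrite !qform_hadamard_rank1 /blockrep qform_tens_ones; congr qform.
apply/matrixP => a b; rewrite [b]ord1 !mxE.
under eq_bigr => i _ do rewrite !mxE mxtens_indexK /= mulrA -sqr_normcE.
rewrite -big_distrl /= -rmorph_sum /= -/(s a) conjC_real /t.
case: eqP => [->|sa]; first by rewrite sqrtr0 !(mulr0, mul0r).
rewrite -{1}(sqr_sqrtr (s0 a)) rmorphXn /=; field.
by rewrite lt0r_neq0 // (ltcR 0) sqrtr_gt0 lt_def s0 andbT; apply/eqP.
Qed.

Lemma psdZ k (c : C) (M : 'M[C]_k) : 0 <= c -> psd M -> psd (c *: M).
Proof. by move=> c0 M0; apply/psdP => x; rewrite qformZ mulr_ge0 //; exact: M0. Qed.

Lemma hadamard_blockrep_le m n (A B : 'M[C]_n) : (0 < m)%N -> psd B -> opnorm B = 1 ->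
  exists2 B', psd B' /\ opnorm B' = 1 &
    opnorm (hadamard (blockrep m A) B') = opnorm (hadamard A B).
Proof.
move=> m_gt0 B0 B1; set t := ((m%:R : R)^-1)%:C%C.
exists (t *: tensmx (onesmx R m) B); first split.
- by apply: psdZ; [rewrite ler0c invr_ge0 ler0n | exact/psd_tens_ones].
- by rewrite opnorm_scaled_tens_ones.
have -> : hadamard (blockrep m A) (t *: tensmx (onesmx R m) B) =
    t *: tensmx (onesmx R m) (hadamard A B).
  by apply/matrixP => k l; rewrite !mxE; ring.
by rewrite opnorm_scaled_tens_ones.
Qed.

Lemma hadamard_blockrep_ge m n (A : 'M[C]_n) (B' : 'M[C]_(m * n)) :
  (0 < m)%N -> psd A -> psd B' -> opnorm B' = 1 ->
  exists2 B, psd B /\ opnorm B = 1 &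
    opnorm (hadamard A B) <= opnorm (hadamard (blockrep m A) B').
Proof.
move=> m_gt0 A0 B'0 B'1; have [x [x1 B'x]] := psd_subr_rank1_top B'0 B'1.
have Am0 : psd (blockrep m A) by exact/psd_tens_ones.
set y := blockmass x; exists (y *m adjmx y).
  by split; [exact: psd_rank1 | rewrite opnorm_rank1 // sqnorm_blockmass].
apply: psd_opnorm_le; [exact: psd_hadamard (psd_rank1 y) | exact: opnorm_ge0 |] => v.
have [v' v'v <-] := qform_hadamard_blockrep_lift A x v.
have : 0 <= qform (hadamard (blockrep m A) (B' - x *m adjmx x)) v'.
  exact: psd_hadamard Am0 B'x v'.
rewrite hadamardBr qformB subr_ge0 => /le_trans; apply.
apply: le_trans (qform_le_opnorm v' (psd_hadamard Am0 B'0)) _.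
by rewrite lecR ler_wpM2l ?opnorm_ge0.
Qed.

End BlockRepetition.

Local Open Scope classical_set_scope.

Lemma inf_eq_dominated (R : realType) (S T : set R) : has_lbound S ->
  S `<=` T -> (forall t, T t -> exists2 s, S s & s <= t) -> inf T = inf S.
Proof.
move=> [b Sb] ST TS.
have [[s Ss]|S0] := pselect (exists s, S s); last first.
  have T0 : T = set0 by apply/seteqP; split => // t /TS [s Ss _]; apply: S0; exists s.
  by rewrite T0 (_ : S = set0) //; apply/seteqP; split => // s Ss; apply: S0; exists s.
have Tb : lbound T b by move=> t /TS [r /Sb br rt]; apply: le_trans rt.
apply/le_anti/andP; split.
  by apply: lb_le_inf; [exists s | move=> s' /ST; apply: ge_inf; exists b].
apply: lb_le_inf; first by exists s; exact: ST.
by move=> t /TS [s' Ss' s't]; apply: le_trans s't; apply: ge_inf => //; exists b.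
Qed.

Theorem mainTheorem3 (R : realType) (n m : nat) (A : 'M[R[i]]_n) :
  (0 < m)%N -> psd A ->
  Iidx (blockrep m A) = Iidx A /\ Isp (blockrep m A) = Isp A.
Proof.
move=> m_gt0 A0; split; first exact: Iidx_blockrep.
apply: inf_eq_dominated.
- by exists 0 => _ [B _ <-]; exact: opnorm_ge0.
- move=> _ [B [B0 B1] <-].
  by have [B' B'1 <-] := hadamard_blockrep_le A m_gt0 B0 B1; exists B'.
- move=> _ [B' [B'0 B'1] <-].
  have [B B1 le] := hadamard_blockrep_ge m_gt0 A0 B'0 B'1.
  by exists (opnorm (hadamard A B)) => //; exists B.
Qed.
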